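(* Let $n\ge2$, let $\pi$ be a permutation of $\{1,\dots,n\}$ and let $T_0$ be the tagged Kuhn simplex $[0,e_{\pi(1)},e_{\pi(1)}+e_{\pi(2)},\dots,e_{\pi(1)}+\dots+e_{\pi(n)}]_n$, where $e_1,\dots,e_n$ are the unit vectors of $\mathbb R^n$. Then every simplex $T$ obtained from $T_0$ by successive applications of Maubach's bisection satisfies $\gamma(T)\le2\gamma(T_0)$.
   Context: Maubach's bisection of a tagged simplex $[v_0,\dots,v_n]_\gamma$, $\gamma\in\{1,\dots,n\}$: with $v'=(v_0+v_\gamma)/2$ and $\gamma'=\gamma-1$ if $\gamma\ge2$, $\gamma'=n$ if $\gamma=1$, the children are $[v_0,\dots,v_{\gamma-1},v',v_{\gamma+1},\dots,v_n]_{\gamma'}$ and $[v_1,\dots,v_\gamma,v',v_{\gamma+1},\dots,v_n]_{\gamma'}$. For a simplex $S$, $\gamma(S)=R(S)/r(S)$ with $R(S)$ the diameter of the smallest ball containing $S$ and $r(S)$ the diameter of the largest ball contained in $S$. *)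

From HB Require Import structures.
From mathcomp Require Import all_boot all_order all_algebra all_fingroup.
From mathcomp Require Import classical_sets boolp reals.
Set Implicit Arguments. Unset Strict Implicit. Unset Printing Implicit Defensive.
Import Order.TTheory GRing.Theory Num.Theory.
Local Open Scope ring_scope.
Local Open Scope classical_set_scope.

Section Defs.
Variables (R : realType) (n : nat).

Definition enorm (x : 'rV[R]_n) : R := Num.sqrt (\sum_(i < n) x ord0 i ^+ 2).

Definition simplex := 'I_n.+1 -> 'rV[R]_n.

Definition hull (v : simplex) : set 'rV[R]_n :=
  [set x | exists l : 'I_n.+1 -> R, (forall i, 0 <= l i) /\
       \sum_(i < n.+1) l i = 1 /\ x = \sum_(i < n.+1) l i *: v i].

Definition cball (c : 'rV[R]_n) (rho : R) : set 'rV[R]_n :=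
  [set x | enorm (x - c) <= rho].

Definition outer_diam (v : simplex) : R :=
  2 * inf [set rho | 0 <= rho /\ exists c, hull v `<=` cball c rho].

Definition inner_diam (v : simplex) : R :=
  2 * sup [set rho | 0 <= rho /\ exists c, cball c rho `<=` hull v].

Definition gamma (v : simplex) : R := outer_diam v / inner_diam v.

(* tagged simplex [v_0,...,v_n]_g, tag g in {1,...,n} *)
Definition tsimplex := (simplex * nat)%type.

Definition new_tag (g : nat) : nat := if (2 <= g)%N then g.-1 else n.

Definition midv (v : simplex) (g : nat) : 'rV[R]_n :=
  (2%:R)^-1 *: (v ord0 + v (inord g)).

Definition child1 (T : tsimplex) : tsimplex :=
  (fun i : 'I_n.+1 => if val i == T.2 then midv T.1 T.2 else T.1 i, new_tag T.2).

Definition child2 (T : tsimplex) : tsimplex :=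
  (fun i : 'I_n.+1 => if (val i < T.2)%N then T.1 (inord i.+1)
                      else if val i == T.2 then midv T.1 T.2 else T.1 i,
   new_tag T.2).

Inductive maubach_desc (T : tsimplex) : tsimplex -> Prop :=
  | md_refl : maubach_desc T T
  | md_child1 T' : maubach_desc T T' -> maubach_desc T (child1 T')
  | md_child2 T' : maubach_desc T T' -> maubach_desc T (child2 T').

Definition unitv (i : 'I_n) : 'rV[R]_n := delta_mx 0 i.

Definition kuhn (p : 'S_n) : simplex :=
  fun k => \sum_(j < n | (j < k)%N) unitv (p j).

End Defs.

From mathcomp Require Import all_boot all_order all_algebra all_fingroup.
From mathcomp Require Import classical_sets boolp reals.
From mathcomp Require Import ring lra zify.
Import Order.TTheory GRing.Theory Num.Theory.
Set Implicit Arguments. Unset Strict Implicit. Unset Printing Implicit Defensive.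
Local Open Scope ring_scope.
Local Open Scope classical_set_scope.

(* Up to a similitude y |-> a + s (sg_i y_(tau i))_i (translation, scaling by s > 0,
   permutation and reflection of coordinates), every simplex obtained from the Kuhn
   simplex K by Maubach bisection has the vertices of K in the positions k <= tag and
   the midpoints of v_0 with the vertices of K in the positions k > tag; bisection
   preserves this shape.  Such a simplex lies between the images of K and of K shrunk
   by 1/2 towards v_0, so its outer diameter is at most s R(K), its inner diameter is
   at least (s/2) r(K), and gamma is at most 2 gamma(K). *)

Section EuclideanNorm.
Variables (R : realType) (n : nat).
Implicit Types x : 'rV[R]_n.

Lemma sum_sqr_ge0 x : 0 <= \sum_i x 0 i ^+ 2.
Proof. by apply: sumr_ge0 => i _; apply: sqr_ge0. Qed.

Lemma coord_le_enorm x i : `|x 0 i| <= enorm x.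
Proof.
rewrite /enorm -sqrtr_sqr ler_sqrt ?sum_sqr_ge0 // (bigD1 i) //= lerDl.
by apply: sumr_ge0 => j _; apply: sqr_ge0.
Qed.

Lemma enorm_le0_eq0 x : enorm x <= 0 -> x = 0.
Proof.
move=> x_le0; apply/matrixP => i j; rewrite (ord1 i) mxE.
by apply/normr0_eq0/le_anti; rewrite normr_ge0 (le_trans (coord_le_enorm _ _)).
Qed.

Lemma enorm_le_coord x M : 0 <= M -> (forall i, `|x 0 i| <= M) -> enorm x <= n%:R * M.
Proof.
move=> M_ge0 xM; rewrite /enorm -(ger0_norm (_ : 0 <= n%:R * M)) ?mulr_ge0 //.
rewrite -sqrtr_sqr ler_sqrt ?sqr_ge0 //.
apply: (@le_trans _ _ (\sum_(i < n) M ^+ 2)).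
  by apply: ler_sum => i _; rewrite -real_normK ?num_real // lerXn2r ?nnegrE.
have n_le_sqr : n%:R <= n%:R ^+ 2 :> R.
  by rewrite -natrX ler_nat; case: (n) => // k; rewrite expnS leq_pmulr.
rewrite sumr_const card_ord exprMn -[M ^+ 2 *+ n]mulr_natl.
by apply: ler_wpM2r; [exact: sqr_ge0 | exact: n_le_sqr].
Qed.

Lemma enorm_opp x : enorm (- x) = enorm x.
Proof. by rewrite /enorm; congr Num.sqrt; apply: eq_bigr => i _; rewrite mxE sqrrN. Qed.

Lemma enorm_scale_delta (i : 'I_n) (r : R) : 0 <= r -> enorm (r *: delta_mx 0 i) = r.
Proof.
move=> r_ge0; rewrite /enorm (bigD1 i) //= big1 => [|j /negbTE ji].
  by rewrite addr0 !mxE eqxx mulr1 sqrtr_sqr ger0_norm.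
by rewrite !mxE eq_sym ji mulr0 expr0n.
Qed.

End EuclideanNorm.

Section ConvexHull.
Variables (R : realType) (n : nat).
Implicit Types (x : 'rV[R]_n) (v w : simplex R n).

Lemma sum_indicator (V : lmodType R) (F : 'I_n.+1 -> V) k :
  \sum_j (j == k)%:R *: F j = F k.
Proof.
rewrite (bigD1 k) //= big1 => [|j /negbTE ->]; last by rewrite scale0r.
by rewrite eqxx scale1r addr0.
Qed.

Lemma sum_indicator1 k : \sum_(j < n.+1) (j == k)%:R = 1 :> R.
Proof. by rewrite (bigD1 k) //= big1 => [|j /negbTE ->]; rewrite ?eqxx ?addr0. Qed.

Lemma hull_vertex v k : hull v (v k).
Proof.
exists (fun j => (j == k)%:R); split=> [j|]; first by rewrite ler0n.
by rewrite sum_indicator1 sum_indicator.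
Qed.

Lemma hull_midpoint v j k : hull v (2^-1 *: (v j + v k)).
Proof.
exists (fun i => 2^-1 * (i == j)%:R + 2^-1 * (i == k)%:R); split.
  by move=> i; rewrite addr_ge0 // mulr_ge0 ?invr_ge0 ?ler0n.
split.
  by rewrite big_split /= -!mulr_sumr !sum_indicator1 mulr1 [RHS](splitr 1) mul1r.
under eq_bigr do rewrite scalerDl -!scalerA.
by rewrite big_split /= -!scaler_sumr !sum_indicator scalerDr.
Qed.

Lemma hull_subset v w : (forall k, hull w (v k)) -> hull v `<=` hull w.
Proof.
move=> /choice[m vm] _ [l [l_ge0 [l_sum1 ->]]].
exists (fun j => \sum_k l k * m k j); split=> [j|].
  by apply: sumr_ge0 => k _; apply: mulr_ge0 => //; case: (vm k).
split.
  rewrite exchange_big /= -l_sum1; apply: eq_bigr => k _.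
  by case: (vm k) => _ [m_sum1 _]; rewrite -mulr_sumr m_sum1 mulr1.
under [RHS]eq_bigr do rewrite scaler_suml.
rewrite exchange_big /=; apply: eq_bigr => k _.
by case: (vm k) => _ [_ ->]; rewrite scaler_sumr; apply: eq_bigr => j _; rewrite scalerA.
Qed.

Definition coord_bound v i := \sum_k `|v k 0 i|.

Lemma coord_bound_ge0 v i : 0 <= coord_bound v i.
Proof. exact: sumr_ge0. Qed.

Lemma hull_coord_le v x i : hull v x -> `|x 0 i| <= coord_bound v i.
Proof.
move=> [l [l_ge0 [l_sum1 ->]]]; rewrite summxE.
apply: le_trans (ler_norm_sum _ _ _) _; apply: ler_sum => k _.
rewrite mxE normrM (ger0_norm (l_ge0 k)) ler_piMl // -l_sum1 (bigD1 k) //= lerDl.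
exact: sumr_ge0.
Qed.

End ConvexHull.

Section Radii.
Variables (R : realType) (n : nat).
Implicit Types v w : simplex R n.

Definition outradii v := [set rho | 0 <= rho /\ exists c, hull v `<=` cball c rho].
Definition inradii v := [set rho | 0 <= rho /\ exists c, cball c rho `<=` hull v].

Lemma outradii_neq0 v : outradii v !=set0.
Proof.
have M_ge0 : 0 <= \sum_i coord_bound v i by apply: sumr_ge0 => i _; apply: coord_bound_ge0.
exists (n%:R * \sum_i coord_bound v i); split; first by rewrite mulr_ge0.
exists 0 => x /hull_coord_le x_le; rewrite /cball /= subr0 enorm_le_coord // => i.
apply: le_trans (x_le i) _; rewrite (bigD1 i) //= lerDl.
by apply: sumr_ge0 => j _; apply: coord_bound_ge0.
Qed.

Lemma inradii_neq0 v : inradii v !=set0.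
Proof.
exists 0; split => //; exists (v ord0) => x /enorm_le0_eq0 /eqP.
by rewrite subr_eq0 => /eqP ->; apply: hull_vertex.
Qed.

Lemma inradii_ub v (i : 'I_n) : ubound (inradii v) (coord_bound v i).
Proof.
move=> r [r_ge0 [c cr_sub]].
have /cr_sub/(hull_coord_le i) : cball c r (c + r *: delta_mx 0 i).
  by rewrite /cball /= addrC addKr enorm_scale_delta.
have /cr_sub/(hull_coord_le i) : cball c r (c - r *: delta_mx 0 i).
  by rewrite /cball /= addrC addKr enorm_opp enorm_scale_delta.
rewrite !mxE !eqxx mulr1 !ler_norml => /andP[? ?] /andP[? ?]; lra.
Qed.

Lemma outradii_subset v w : hull v `<=` hull w -> outradii w `<=` outradii v.
Proof. by move=> vw r [r_ge0 [c wc]]; split => //; exists c => x /vw /wc. Qed.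

Lemma inradii_subset v w : hull v `<=` hull w -> inradii v `<=` inradii w.
Proof. by move=> vw r [r_ge0 [c cv]]; split => //; exists c => x /cv /vw. Qed.

Lemma outer_diam_ge0 v : 0 <= outer_diam v.
Proof. by rewrite mulr_ge0 //; apply: lb_le_inf; [exact: outradii_neq0 | move=> r []]. Qed.

Lemma outer_diam_le_scale v w s : 0 < s ->
  (forall r, outradii v r -> outradii w (s * r)) -> outer_diam w <= s * outer_diam v.
Proof.
move=> s_gt0 vw; rewrite /outer_diam mulrCA ler_pM2l // -ler_pdivrMl //.
apply: lb_le_inf; first exact: outradii_neq0.
move=> r vr; rewrite ler_pdivrMl //; apply: ge_inf (vw _ vr).
by exists 0 => ? [].
Qed.

(* The index [i] only witnesses [n > 0]: in dimension 0 every ball is a point, so the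
   inradii are unbounded and [sup] returns a junk value. *)
Lemma inner_diam_ge_scale v w s (i : 'I_n) : 0 < s ->
  (forall r, inradii v r -> inradii w (s * r)) -> s * inner_diam v <= inner_diam w.
Proof.
move=> s_gt0 vw; rewrite /inner_diam mulrCA ler_pM2l // -ler_pdivlMl //.
apply: ge_sup; first exact: inradii_neq0.
move=> r vr; rewrite ler_pdivlMl //; apply: ub_le_sup (vw _ vr).
by exists (coord_bound w i); apply: inradii_ub.
Qed.

End Radii.

Section Similitude.
Variables (R : realType) (n : nat).
Variables (a : 'rV[R]_n) (s : R) (sg : 'I_n -> R) (tau : 'S_n).
Hypotheses (s_gt0 : 0 < s) (sg_sqr : forall i, sg i ^+ 2 = 1).

Definition simil (y : 'rV[R]_n) : 'rV[R]_n := \row_i (a 0 i + s * sg i * y 0 (tau i)).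

Lemma simil_affine (l : 'I_n.+1 -> R) (v : simplex R n) : \sum_k l k = 1 ->
  simil (\sum_k l k *: v k) = \sum_k l k *: simil (v k).
Proof.
move=> l_sum1; apply/rowP => i; rewrite !mxE !summxE.
under eq_bigr do rewrite !mxE.
under [RHS]eq_bigr do rewrite !mxE mulrDr.
rewrite big_split /= -mulr_suml l_sum1 mul1r mulr_sumr; congr (_ + _).
by apply: eq_bigr => k _; ring.
Qed.

Lemma enorm_simil x y : enorm (simil x - simil y) = s * enorm (x - y).
Proof.
have sum_sqr : \sum_i (simil x - simil y) 0 i ^+ 2 = s ^+ 2 * \sum_i (x - y) 0 i ^+ 2.
  rewrite mulr_sumr [in RHS](reindex_inj (@perm_inj _ tau)) /=.
  apply: eq_bigr => i _; rewrite !mxE opprD addrACA subrr add0r -mulrN -mulrDr.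
  by rewrite !exprMn sg_sqr mulr1.
by rewrite /enorm sum_sqr sqrtrM ?sqr_ge0 // sqrtr_sqr gtr0_norm.
Qed.

Lemma simil_surj x : exists y, simil y = x.
Proof.
exists (\row_j ((x - a) 0 ((tau^-1)%g j) * sg ((tau^-1)%g j) / s)).
apply/rowP => i; rewrite !mxE permK.
have -> : s * sg i * ((x 0 i - a 0 i) * sg i / s) = sg i ^+ 2 * (x 0 i - a 0 i).
  by field; rewrite gt_eqF.
by rewrite sg_sqr mul1r addrC subrK.
Qed.

Lemma outradii_simil (v : simplex R n) r : outradii v r -> outradii (simil \o v) (s * r).
Proof.
move=> [r_ge0 [c vc]]; split; first by rewrite mulr_ge0 // ltW.
exists (simil c) => _ [l [l_ge0 [l_sum1 ->]]].
rewrite /cball /= -simil_affine // enorm_simil ler_pM2l //.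
by apply: vc; exists l.
Qed.

Lemma inradii_simil (v : simplex R n) r : inradii v r -> inradii (simil \o v) (s * r).
Proof.
move=> [r_ge0 [c cv]]; split; first by rewrite mulr_ge0 // ltW.
exists (simil c) => x; have [y <-] := simil_surj x.
rewrite /cball /= enorm_simil ler_pM2l // => /cv[l [l_ge0 [l_sum1 ->]]].
by exists l; rewrite simil_affine.
Qed.

End Similitude.

Lemma kuhn_coord (R : realType) (n : nat) (p : 'S_n) (k : 'I_n.+1) (i : 'I_n) :
  kuhn R p k 0 i = ((p^-1)%g i < k)%:R.
Proof.
rewrite /kuhn summxE (eq_bigr (fun j : 'I_n => (j == (p^-1)%g i)%:R)); last first.
  by move=> j _; rewrite !mxE eqxx /= eq_sym (canF_eq (permK p)).
by rewrite big_mkcond /= (bigD1 ((p^-1)%g i)) //= eqxx big1 ?addr0 => [|j /negbTE ->];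
  case: ifP.
Qed.

Section KuhnHull.
Variables (R : realType) (m : nat) (p : 'S_m.+1).
Local Notation n := m.+1.

Lemma hull_kuhn_sorted (x : 'rV[R]_n) :
  (forall t : 'I_n, 0 <= x 0 (p t) <= 1) ->
  (forall t u : 'I_n, (t <= u)%N -> x 0 (p u) <= x 0 (p t)) ->
  hull (kuhn R p) x.
Proof.
move=> x01 x_sorted.
(* The barycentric weights are the gaps between consecutive sorted coordinates. *)
pose Q t : R := if t == 0%N then 1 else if (t <= n)%N then x 0 (p (inord t.-1)) else 0.
have Q_step t : Q t.+1 <= Q t.
  rewrite /Q /=; case: t => [|t] /=.
    by have /andP[_] := x01 (inord 0).
  case: ltngtP => [tn | // | _]; first by apply: x_sorted; rewrite !inordK // ltnW.
  by have /andP[] := x01 (inord t).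
have sum_Q (a b : nat) : (a <= b)%N -> \sum_(a <= k < b) (Q k - Q k.+1) = Q a - Q b.
  move=> ab; rewrite (@telescope_sumr_eq _ a b (fun k => - Q k)) ?opprK 1?addrC //.
  by move=> k _; rewrite opprK addrC.
exists (fun k : 'I_n.+1 => Q k - Q k.+1); split=> [k|]; first by rewrite subr_ge0.
split.
  by rewrite -(big_mkord xpredT (fun k => Q k - Q k.+1)) sum_Q // /Q /= ltnn subr0.
apply/rowP => j; rewrite summxE; symmetry.
under eq_bigr do rewrite mxE kuhn_coord.
set t := (p^-1)%g j.
rewrite -(big_mkord xpredT (fun k => (Q k - Q k.+1) * (t < k)%:R)).
rewrite (@big_cat_nat _ _ _ t.+1) //=; last exact: leqW (ltn_ord t).
rewrite big1_seq ?add0r => [|k]; last first.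
  by rewrite mem_index_iota => /and3P[_ _ kt]; rewrite ltnNge -ltnS kt mulr0.
rewrite (eq_big_nat _ _ (F2 := fun k => Q k - Q k.+1)) => [|k /andP[tk _]]; last first.
  by rewrite tk mulr1.
by rewrite sum_Q /Q /= ?ltn_ord ?ltnn ?subr0 ?inord_val ?permKV // ltnS ltnW.
Qed.

Lemma inradii_kuhn : inradii (kuhn R p) ((n.+1)%:R^-1 / 2).
Proof.
set u : R := (n.+1)%:R^-1.
have u_gt0 : 0 < u by rewrite invr_gt0.
have nu : n%:R * u = 1 - u.
  by rewrite /u -natr1; field; rewrite -natrD pnatr_eq0.
split; first by rewrite ltW // divr_gt0.
(* Centre at the barycentre; the radius keeps the coordinates sorted and in [0, 1]. *)
exists (\row_i ((n%:R - ((p^-1)%g i)%:R) * u)) => x x_near.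
have near (t : 'I_n) : (n%:R - t%:R) * u - u / 2 <= x 0 (p t) <= (n%:R - t%:R) * u + u / 2.
  have := le_trans (coord_le_enorm _ (p t)) x_near.
  by rewrite !mxE permK ler_norml => /andP[? ?]; apply/andP; split; lra.
apply: hull_kuhn_sorted => [t | t t' tt'].
  have : t.+1%:R <= n%:R :> R by rewrite ler_nat ltn_ord.
  have := ler0n R t; have := near t; rewrite -natr1 => /andP[? ?] ? ?.
  by apply/andP; split; nra.
have [<- // | tt'_neq] := eqVneq t t'.
have : t.+1%:R <= t'%:R :> R by rewrite ler_nat ltn_neqAle tt'_neq.
have := near t; have := near t'; rewrite -natr1 => /andP[? ?] /andP[? ?] ?; nra.
Qed.

Lemma inner_diam_kuhn_gt0 : 0 < inner_diam (kuhn R p).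
Proof.
rewrite /inner_diam mulr_gt0 //; apply: lt_le_trans (ub_le_sup _ inradii_kuhn).
  by rewrite divr_gt0 // invr_gt0.
by exists (coord_bound (kuhn R p) ord0); apply: inradii_ub.
Qed.

End KuhnHull.

Ltac case_bools := repeat match goal with
  | |- context [if ?b then _ else _] =>
      lazymatch b with true => fail | false => fail | _ => let E := fresh "E" in case E: b end
  | |- context [nat_of_bool ?b] =>
      lazymatch b with true => fail | false => fail | _ => let E := fresh "E" in case E: b end
  end.

Section MaubachForm.
Variables (R : realType) (m : nat).
Local Notation n := m.+1.

Definition maubach_form (a : 'rV[R]_n) (s : R) (rho : 'S_n) (sg : 'I_n -> R) (g : nat) :
    simplex R n :=
  fun k => \row_i (a 0 i + (if (k <= g)%N then s else s / 2) * sg i * (rho i < k)%:R).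

Definition maubach_shaped (T : tsimplex R n) := exists a s rho sg,
  [/\ 0 < s, (forall i, sg i ^+ 2 = 1), (1 <= T.2 <= n)%N &
      forall k, T.1 k = maubach_form a s rho sg T.2 k].

Lemma shaped_kuhn (p : 'S_n) : maubach_shaped (kuhn R p, n).
Proof.
exists 0, 1, (p^-1)%g, (fun=> 1); split => //= [_|k]; first by rewrite expr1n.
apply/rowP => i; rewrite !mxE kuhn_coord leq_ord.
by rewrite add0r !mul1r.
Qed.

Lemma shaped_child1 T : maubach_shaped T -> maubach_shaped (child1 T).
Proof.
case: T => v g [a [s [rho [sg [s_gt0 sg_sqr /andP[/= g_ge1 g_le] v_form]]]]].
rewrite /child1 /new_tag /=.
exists a, (if (2 <= g)%N then s else s / 2), rho, sg; split => //.
- by case: ifP; rewrite ?divr_gt0.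
- by case: (leqP 2 g) => ? /=; lia.
move=> k; apply/rowP => j /=; rewrite /midv [LHS](fun_if (fun M : 'rV[R]_n => M 0 j)).
rewrite (v_form ord0) (v_form (inord g)) (v_form k) !mxE.
rewrite inordK ?ltnS //; case: (leqP 2 g) => ?; have := ltn_ord k; have := ltn_ord (rho j).
all: by rewrite /=; case_bools => /= *; first [lia | field].
Qed.

Definition rot_prefix (g : nat) (j : 'I_n) : 'I_n :=
  inord (if j == 0%N :> nat then g.-1 else if (j < g)%N then j.-1 else j).

Lemma rot_prefixE g j : (1 <= g <= n)%N ->
  rot_prefix g j = (if j == 0%N :> nat then g.-1 else if (j < g)%N then j.-1 else j) :> nat.
Proof. by move=> g_bnd; rewrite inordK //; have := ltn_ord j; case_bools => /= *; lia. Qed.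

Lemma rot_prefix_inj g : (1 <= g <= n)%N -> injective (rot_prefix g).
Proof.
move=> g_bnd j1 j2 /(congr1 val); rewrite /= !rot_prefixE //.
by have := ltn_ord j1; have := ltn_ord j2; case_bools => /= *; apply: val_inj => /=; lia.
Qed.

Lemma shaped_child2 T : maubach_shaped T -> maubach_shaped (child2 T).
Proof.
case: T => v g [a [s [rho [sg [s_gt0 sg_sqr /andP[/= g_ge1 g_le] v_form]]]]].
have g_bnd : (1 <= g <= n)%N by rewrite g_ge1.
(* Re-centre at v_1: reflect the coordinate of rank 0 and rotate the ranks below the tag. *)
pose sg' i := if rho i == 0%N :> nat then - sg i else sg i.
pose rho' := (rho * perm (rot_prefix_inj g_bnd))%g.
have rho'E i : rho' i = rot_prefix g (rho i) :> nat by rewrite permM permE.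
rewrite /child2 /new_tag /=.
exists (v (inord 1)), (if (2 <= g)%N then s else s / 2), rho', sg'; split => //.
- by case: ifP; rewrite ?divr_gt0.
- by move=> i; rewrite /sg'; case: ifP; rewrite ?sqrrN.
- by case: (leqP 2 g) => ? /=; lia.
move=> k; apply/rowP => j /=; rewrite /midv; case: (ltnP k g) => kg.
  have k1_le : (k.+1 <= n)%N by apply: leq_trans g_le.
  rewrite (v_form (inord k.+1)) (v_form (inord 1)) !mxE rho'E rot_prefixE // /sg' !inordK //.
  by case: (leqP 2 g) => ?; have := ltn_ord k; have := ltn_ord (rho j);
    rewrite /=; case_bools => /= *; first [lia | field].
rewrite !(fun_if (fun M : 'rV[R]_n => M 0 j)) (v_form ord0) (v_form (inord g)) (v_form k).
rewrite (v_form (inord 1)) !mxE rho'E rot_prefixE // /sg' !inordK //.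
by case: (leqP 2 g) => ?; have := ltn_ord k; have := ltn_ord (rho j);
  rewrite /=; case_bools => /= *; first [lia | field].
Qed.

End MaubachForm.

Lemma gamma_le_ratio (R : realType) (n : nat) (v w : simplex R n) (s t : R) :
  0 < s -> 0 < t -> 0 < inner_diam w ->
  outer_diam v <= s * outer_diam w -> t * inner_diam w <= inner_diam v ->
  gamma v <= s / t * gamma w.
Proof.
move=> s_gt0 t_gt0 w_gt0 out_le in_ge.
have v_gt0 : 0 < inner_diam v by apply: lt_le_trans in_ge; rewrite mulr_gt0.
rewrite /gamma ler_pdivrMr // (le_trans out_le) //.
have -> : s * outer_diam w = s / t * (outer_diam w / inner_diam w) * (t * inner_diam w).
  by field; rewrite !gt_eqF.
apply: ler_wpM2l in_ge.
by rewrite mulr_ge0 // divr_ge0 ?outer_diam_ge0 ?ltW.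
Qed.

Section KuhnSandwich.
Variables (R : realType) (m : nat) (p : 'S_m.+1).
Local Notation n := m.+1.

Lemma shaped_desc (T : tsimplex R n) : maubach_desc (kuhn R p, n) T -> maubach_shaped T.
Proof.
by elim=> [|T' _|T' _]; [apply: shaped_kuhn | apply: shaped_child1 | apply: shaped_child2].
Qed.

Definition kuhn_image (a : 'rV[R]_n) (s : R) (rho : 'S_n) (sg : 'I_n -> R) : simplex R n :=
  simil a s sg (rho * p) \o kuhn R p.

Lemma kuhn_imageE a s rho sg k :
  kuhn_image a s rho sg k = \row_i (a 0 i + s * sg i * (rho i < k)%:R).
Proof. by apply/rowP => i; rewrite !mxE kuhn_coord permM permK. Qed.

Lemma hull_maubach_form_sub a s rho sg g :
  hull (maubach_form a s rho sg g) `<=` hull (kuhn_image a s rho sg).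
Proof.
apply: hull_subset => k; case: (leqP k g) => kg.
  have -> : maubach_form a s rho sg g k = kuhn_image a s rho sg k.
    by apply/rowP => i; rewrite (kuhn_imageE a s rho sg) !mxE kg.
  exact: hull_vertex.
have -> : maubach_form a s rho sg g k =
    2^-1 *: (kuhn_image a s rho sg ord0 + kuhn_image a s rho sg k).
  by apply/rowP => i; rewrite !(kuhn_imageE a s rho sg) !mxE (leqNgt k g) kg /=; field.
exact: hull_midpoint.
Qed.

Lemma hull_sub_maubach_form a s rho sg g :
  hull (kuhn_image a (s / 2) rho sg) `<=` hull (maubach_form a s rho sg g).
Proof.
apply: hull_subset => k; case: (leqP k g) => kg.
  have -> : kuhn_image a (s / 2) rho sg k =
      2^-1 *: (maubach_form a s rho sg g ord0 + maubach_form a s rho sg g k).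
    by apply/rowP => i; rewrite (kuhn_imageE a (s / 2) rho sg) !mxE kg /=; field.
  exact: hull_midpoint.
have -> : kuhn_image a (s / 2) rho sg k = maubach_form a s rho sg g k.
  by apply/rowP => i; rewrite (kuhn_imageE a (s / 2) rho sg) !mxE (leqNgt k g) kg.
exact: hull_vertex.
Qed.

Lemma gamma_shaped (T : tsimplex R n) : maubach_shaped T -> gamma T.1 <= 2 * gamma (kuhn R p).
Proof.
case: T => v g [a [s [rho [sg [s_gt0 sg_sqr _ /funext /= ->]]]]].
have s2_gt0 : 0 < s / 2 by rewrite divr_gt0.
have -> : 2 = s / (s / 2) :> R by field; rewrite gt_eqF.
apply: (gamma_le_ratio s_gt0 s2_gt0 (inner_diam_kuhn_gt0 R p)).
  apply: outer_diam_le_scale => // r /(outradii_simil a (rho * p) s_gt0 sg_sqr).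
  by apply: outradii_subset; apply: hull_maubach_form_sub.
apply: (inner_diam_ge_scale ord0) => // r /(inradii_simil a (rho * p) s2_gt0 sg_sqr).
by apply: inradii_subset; apply: hull_sub_maubach_form.
Qed.

End KuhnSandwich.

Unset Implicit Arguments.
Local Close Scope classical_set_scope.

Theorem lemmaA2 (R : realType) (n : nat) (hn : (2 <= n)%N) (p : 'S_n)
  (T : tsimplex R n) :
  maubach_desc (@kuhn R n p, n) T ->
  gamma T.1 <= 2 * gamma (@kuhn R n p).
Proof.
case: n hn p T => [|m] // _ p T /shaped_desc.
exact: gamma_shaped.
Qed.
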